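(* Let $d\ge 2$, let $\rho$ be a density operator on $\mathbb{C}^d$, and let $\{|i_m\rangle\}_{i=1}^d$, $m=1,\dots,M$, be $M$ mutually unbiased orthonormal bases of $\mathbb{C}^d$, with $p_{i_m}=\langle i_m|\rho|i_m\rangle$. Let $C>0$ be any number with $\sum_{m=1}^M\sum_{i=1}^d p_{i_m}^2\le C$ (for example $C=\operatorname{Tr}(\rho^2)+\frac{M-1}{d}$). Put $K=\lfloor M/C\rfloor$ and $a=M/C-K$. Then $$\sum_{m=1}^M H\{p_{i_m};i\}\ \ge\ aC(K+1)\log_2(K+1)+(1-a)CK\log_2K.$$
   Context: Orthonormal bases $\{|i_m\rangle\}_{i=1}^d$, $m=1,\dots,M$, of $\mathbb{C}^d$ are mutually unbiased if $|\langle i_m|j_n\rangle|^2=1/d$ for all $i,j$ and all $m\ne n$. $H\{p_{i_m};i\}=-\sum_{i=1}^d p_{i_m}\log_2 p_{i_m}$ is the Shannon entropy of the outcome distribution in the $m$th basis, with the convention $0\log_2 0=0$. *)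

From mathcomp Require Import all_boot all_order all_algebra.
From mathcomp Require Export complex.
From mathcomp Require Import reals exp.
Import GRing.Theory Num.Theory.
Local Open Scope ring_scope.

Set Implicit Arguments.
Unset Strict Implicit.
Unset Printing Implicit Defensive.

Section Defs.
Variable R : realType.
Variable d : nat.

Definition cinner (u v : 'cV[R[i]]_d) : R[i] :=
  \sum_(k < d) (u k 0)^* * v k 0.

Definition density_op (rho : 'M[R[i]]_d) : Prop :=
  [/\ (forall i j, rho j i = (rho i j)^*),
      (forall v : 'cV[R[i]]_d, 0 <= cinner v (rho *m v)) &
      \tr rho = 1].

Definition orthonormal_basis (e : 'I_d -> 'cV[R[i]]_d) : Prop :=
  forall i j, cinner (e i) (e j) = (i == j)%:R.

Definition MUBs (M : nat) (e : 'I_M -> 'I_d -> 'cV[R[i]]_d) : Prop :=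
  (forall m, orthonormal_basis (e m)) /\
  (forall m n i j, m != n -> `|cinner (e m i) (e n j)| ^+ 2 = d%:R^-1).

(* p_{i_m} = <i_m|rho|i_m> (real since rho is Hermitian; we take its real part). *)
Definition prob (rho : 'M[R[i]]_d) (v : 'cV[R[i]]_d) : R :=
  complex.Re (cinner v (rho *m v)).

End Defs.

Definition xlog2x {R : realType} (x : R) : R :=
  if x == 0 then 0 else x * (ln x / ln 2).

Definition shannon {R : realType} {d : nat} (p : 'I_d -> R) : R :=
  - \sum_(i < d) xlog2x (p i).

(* Entropy in nats lies above the chord through the points (1/k, ln k) and
   (1/(k+1), ln (k+1)) of the (index of coincidence, entropy) plane:
   H(p) >= ht_alpha k - ht_beta k * sum_i p_i^2 for every integer k >= 1
   (Harremoës-Topsøe).  Summing over the M bases, bounding the total index of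
   coincidence by C and taking k = K gives C times the chord evaluated at
   M/C = K + a, which is the claimed bound; for K = 0 the bound is 0.

   The chord inequality says sum_i gap(p_i) >= 0, where
   gap(x) = -x ln x - alpha x + beta x^2 is concave below 1/(2 beta) and convex
   above.  Concavity merges the small p_i into copies of the inflection point
   plus one remainder t; Jensen replaces all other values by N copies of their
   mean x.  Finally N gap(x) + gap(t) >= 0: gap >= 0 outside (1/(k+1), 1/k),
   and inside that interval N = k and a one-variable study of
   k gap(x) + gap(1 - k x) concludes. *)

From mathcomp Require Import all_boot all_order all_algebra.
From mathcomp Require Import complex reals exp.
From mathcomp Require Import normedtype derive realfun.
From mathcomp Require Import ring lra.
Import Order.TTheory GRing.Theory Num.Theory numFieldNormedType.Exports.
Local Open Scope ring_scope.
Set Implicit Arguments.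
Unset Strict Implicit.
Unset Printing Implicit Defensive.

Section RealCalculus.
Variable R : realType.
Implicit Types a b x : R.

Lemma ln_le_subr1 x : 0 < x -> ln x <= x - 1.
Proof.
move=> x0; have := @le_ln1Dx R (x - 1); rewrite [1 + _]addrC subrK; apply.
lra.
Qed.

Lemma subr_ln_ge a b : 0 < a -> 0 < b -> 1 - b / a <= ln a - ln b.
Proof.
move=> a0 b0; rewrite -ln_div ?posrE //.
have := @ln_le_subr1 (b / a); rewrite divr_gt0 // => /(_ isT).
rewrite -invf_div lnV ?posrE ?divr_gt0 //; lra.
Qed.

Lemma subr_ln_le a b : 0 < a -> 0 < b -> ln a - ln b <= a / b - 1.
Proof.
by move=> a0 b0; rewrite -ln_div ?posrE //; apply: ln_le_subr1; rewrite divr_gt0.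
Qed.

Lemma MVT_open (f df : R -> R) a b : a < b ->
  (forall x, a <= x <= b -> is_derive x 1 f (df x)) ->
  exists2 c, a < c < b & f b - f a = df c * (b - a).
Proof.
move=> ab hd.
have hd' x : x \in `]a, b[ -> is_derive x 1 f (df x).
  by rewrite in_itv /= => /andP[/ltW ax /ltW xb]; apply: hd; rewrite ax xb.
have hc : {in `[a, b], forall x, derivable f x 1}.
  by move=> x; rewrite in_itv /= => /hd [].
have [c cab ->] := MVT ab hd' (derivable_within_continuous hc).
by exists c => //; move: cab; rewrite in_itv.
Qed.

Lemma ler_derive_ge0 (f df : R -> R) a b : a <= b ->
  (forall x, a <= x <= b -> is_derive x 1 f (df x)) ->
  (forall x, a <= x <= b -> 0 <= df x) -> f a <= f b.
Proof.
move=> ab hd hpos; have [<-//|ab'] := eqVneq a b.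
have {ab'}ab : a < b by rewrite lt_neqAle ab' ab.
have [c /andP[ac cb] e] := MVT_open ab hd.
have : 0 <= df c * (b - a).
  by apply: mulr_ge0; [apply: hpos; rewrite !ltW | rewrite subr_ge0 ltW].
lra.
Qed.

Lemma ger_derive_le0 (f df : R -> R) a b : a <= b ->
  (forall x, a <= x <= b -> is_derive x 1 f (df x)) ->
  (forall x, a <= x <= b -> df x <= 0) -> f b <= f a.
Proof.
move=> ab hd hneg; rewrite -lerN2.
apply: (@ler_derive_ge0 (fun x => - f x) (fun x => - df x)) => // x /[dup] /hd dfx.
  by move=> _; apply: is_deriveN.
by move=> /hneg; rewrite oppr_ge0.
Qed.

Lemma is_derive_mulr_ln x : 0 < x -> is_derive x 1 (fun y : R => y * ln y) (1 + ln x).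
Proof.
move=> x0; have := is_deriveM (is_derive_id x 1) (is_derive1_ln x0) => dxlnx.
by apply: is_derive_eq; rewrite [_%:A]mulr1 -[x *: _]/(x * x^-1) mulfV ?gt_eqF.
Qed.

Lemma is_derive_comp_affine (f : R -> R) (k x df : R) :
  is_derive (1 - k * x) 1 f df -> is_derive x 1 (fun y => f (1 - k * y)) (df * - k).
Proof.
move=> fdf; have daff : is_derive x 1 (fun y : R => 1 - k * y) (- k).
  by apply: is_derive_eq; rewrite [_%:A]mulr1 add0r mul1r.
exact: is_derive1_comp.
Qed.

Lemma concave_ge0_between (E dE : R -> R) a b :
  (forall x, a <= x <= b -> is_derive x 1 E (dE x)) ->
  (forall x y, a <= x -> x <= y -> y <= b -> dE y <= dE x) ->
  E a = 0 -> forall c x, a <= c -> c <= x -> x <= b -> 0 <= E x -> 0 <= E c.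
Proof.
move=> hd hm Ea c x ac cx xb Ex.
have [<-|ac'] := eqVneq a c; first by rewrite Ea.
have {}ac' : a < c by rewrite lt_neqAle ac' ac.
rewrite leNgt; apply/negP => Ec.
have [c1 /andP[ac1 c1c] e1] : exists2 c1, a < c1 < c & E c - E a = dE c1 * (c - a).
  apply: MVT_open => // y /andP[ay yc]; apply: hd.
  by rewrite ay (le_trans yc (le_trans cx xb)).
have dE1 : dE c1 < 0.
  have ca : 0 < c - a by rewrite subr_gt0.
  by move: e1; rewrite Ea subr0 => e1; rewrite -(pmulr_llt0 _ ca) -e1.
have [cx'|cx'] := eqVneq c x; first by move: Ex; rewrite -cx' leNgt Ec.
have {}cx' : c < x by rewrite lt_neqAle cx' cx.
have [c2 /andP[cc2 c2x] e2] : exists2 c2, c < c2 < x & E x - E c = dE c2 * (x - c).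
  apply: MVT_open => // y /andP[cy yx]; apply: hd.
  by rewrite (le_trans ac cy) (le_trans yx xb).
have dE2 : dE c2 < 0.
  apply: le_lt_trans dE1; apply: hm; first exact: ltW.
    exact: ltW (lt_trans c1c cc2).
  exact: le_trans (ltW c2x) xb.
have : dE c2 * (x - c) < 0 by rewrite pmulr_llt0 ?subr_gt0.
lra.
Qed.

End RealCalculus.

Section Gap.
Variable R : realType.
Variables al be : R.
Implicit Types a b c d t x y : R.

Definition gap x := - (x * ln x) - al * x + be * x ^+ 2.
Definition dgap x := - ln x - 1 - al + 2 * be * x.
Definition ddgap x := 2 * be - x^-1.

Lemma gap0 : gap 0 = 0.
Proof. by rewrite /gap !mul0r expr0n /= mulr0; lra. Qed.

Lemma gapE x : gap x = x * (- ln x - al + be * x).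
Proof. by rewrite /gap; ring. Qed.

Lemma is_derive_gap x : 0 < x -> is_derive x 1 gap (dgap x).
Proof.
move=> x0; have := is_derive_mulr_ln x0 => dxlnx.
by apply: is_derive_eq; rewrite ![_%:A]mulr1 -[be *: _]/(be * _) /dgap; ring.
Qed.

Lemma is_derive_dgap x : 0 < x -> is_derive x 1 dgap (ddgap x).
Proof.
move=> x0; have := is_derive1_ln x0 => dln.
by apply: is_derive_eq; rewrite [_%:A]mulr1 /ddgap; ring.
Qed.

Lemma gap_MVT a b : 0 < a -> a < b ->
  exists2 c, a < c < b & gap b - gap a = dgap c * (b - a).
Proof.
move=> a0 ab; apply: MVT_open => // x /andP[ax _].
exact/is_derive_gap/(lt_le_trans a0 ax).
Qed.

(* [gap] is concave on [[0, 1/(2 be)]] and convex beyond, where its second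
   derivative [ddgap] changes sign. *)
Lemma dgap_le a b : 0 < a -> a <= b -> 1 <= 2 * be * a -> dgap a <= dgap b.
Proof.
move=> a0 ab hb; have b0 : 0 < b := lt_le_trans a0 ab.
have := subr_ln_ge a0 b0.
have : b / a - 1 <= 2 * be * (b - a).
  have -> : b / a - 1 = (b - a) / a by field; rewrite gt_eqF.
  rewrite ler_pdivrMr //.
  have : 0 <= (b - a) * (2 * be * a - 1) by apply: mulr_ge0; lra.
  lra.
rewrite /dgap; lra.
Qed.

Lemma dgap_ge a b : 0 < a -> a <= b -> 2 * be * b <= 1 -> dgap b <= dgap a.
Proof.
move=> a0 ab hb; have b0 : 0 < b := lt_le_trans a0 ab.
have := subr_ln_ge b0 a0.
have : 2 * be * (b - a) <= 1 - a / b.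
  have -> : 1 - a / b = (b - a) / b by field; rewrite gt_eqF.
  rewrite ler_pdivlMr //.
  have : 0 <= (b - a) * (1 - 2 * be * b) by apply: mulr_ge0; lra.
  lra.
rewrite /dgap; lra.
Qed.

Lemma gap_tangent_convex x y : 0 < x -> 0 < y ->
  1 <= 2 * be * x -> 1 <= 2 * be * y -> gap x + dgap x * (y - x) <= gap y.
Proof.
move=> x0 y0 hx hy.
have [xy|yx|<-] := ltgtP x y; last by rewrite subrr mulr0 addr0.
- have [c /andP[xc cy] e] := gap_MVT x0 xy.
  have := dgap_le x0 (ltW xc) hx.
  have : 0 <= y - x by lra.
  move=> h1 h2; have := ler_wpM2r h1 h2; lra.
- have [c /andP[yc cx] e] := gap_MVT y0 yx.
  have c0 : 0 < c by apply: lt_trans yc.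
  have be0 : 0 <= be.
    by move: (lt_le_trans ltr01 hy); rewrite pmulr_lgt0 // => /ltW; rewrite pmulr_rge0.
  have hc : 1 <= 2 * be * c.
    by apply: (le_trans hy); apply: ler_wpM2l; [rewrite mulr_ge0 | exact: ltW].
  have := dgap_le c0 (ltW cx) hc.
  have : 0 <= x - y by lra.
  move=> h1 h2; have := ler_wpM2r h1 h2; lra.
Qed.

Lemma gap_tangent_concave x y : 0 < x -> 0 <= y -> 0 <= be ->
  2 * be * x <= 1 -> 2 * be * y <= 1 -> gap y <= gap x + dgap x * (y - x).
Proof.
move=> x0 y0 be0 hx hy.
have [<-|y0'] := eqVneq 0 y.
  have : 0 <= x * (1 - be * x) by apply: mulr_ge0; lra.
  by rewrite gap0 /gap /dgap expr2; lra.
have {}y0 : 0 < y by rewrite lt_neqAle y0' y0.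
have [xy|yx|<-] := ltgtP x y; last by rewrite subrr mulr0 addr0.
- have [c /andP[xc cy] e] := gap_MVT x0 xy.
  have hc : 2 * be * c <= 1.
    by apply: le_trans hy; apply: ler_wpM2l; rewrite ?mulr_ge0 // ltW.
  have := dgap_ge x0 (ltW xc) hc.
  have : 0 <= y - x by lra.
  move=> h1 h2; have := ler_wpM2r h1 h2; lra.
- have [c /andP[yc cx] e] := gap_MVT y0 yx.
  have := dgap_ge (lt_trans y0 yc) (ltW cx) hx.
  have : 0 <= x - y by lra.
  move=> h1 h2; have := ler_wpM2r h1 h2; lra.
Qed.

(* Karamata's inequality for two points of the concave region. *)
Lemma gap_spread a b c d : 0 <= c -> c <= a -> c <= b -> a <= d -> b <= d ->
  0 <= be -> 2 * be * d <= 1 -> a + b = c + d -> gap c + gap d <= gap a + gap b.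
Proof.
wlog ab : a b / a <= b.
  move=> wlog_ab; have [ab|/ltW ba] := leP a b; first exact: wlog_ab.
  move=> c0 ca cb ad bd be0 hd e; rewrite [gap a + _]addrC.
  by apply: wlog_ab => //; rewrite addrC.
move=> c0 ca _ _ bd be0 hd e.
have [a0|a0] := eqVneq a 0.
  have c0' : c = 0 by apply/eqP; rewrite eq_le c0 andbT -a0.
  have -> : d = b by move: e; rewrite a0 c0'; lra.
  by rewrite c0' a0.
have {}a0 : 0 < a by rewrite lt_neqAle eq_sym a0 (le_trans c0 ca).
have b0 : 0 < b := lt_le_trans a0 ab.
have hb : 2 * be * b <= 1 by apply: le_trans hd; apply: ler_wpM2l; rewrite ?mulr_ge0.
have ha : 2 * be * a <= 1 by apply: le_trans hb; apply: ler_wpM2l; rewrite ?mulr_ge0.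
have hc : 2 * be * c <= 1 by apply: le_trans ha; apply: ler_wpM2l; rewrite ?mulr_ge0.
have t1 := gap_tangent_concave a0 c0 be0 ha hc.
have t2 := gap_tangent_concave b0 (le_trans (ltW b0) bd) be0 hb hd.
have ac : 0 <= a - c by lra.
have := ler_wpM2r ac (dgap_ge a0 ab hb).
rewrite (_ : d - b = a - c) in t2; lra.
Qed.

Lemma gap_jensen x (r : seq R) : 0 < x -> 1 <= 2 * be * x ->
  all (fun y => (0 < y) && (1 <= 2 * be * y)) r ->
  (size r)%:R * gap x + dgap x * (\sum_(y <- r) y - (size r)%:R * x)
    <= \sum_(y <- r) gap y.
Proof.
move=> x0 hx; elim: r => [|y r IH] /=.
  by move=> _; rewrite !big_nil !mul0r subr0 mulr0 addr0.
move=> /andP[/andP[y0 hy] /IH h]; rewrite !big_cons.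
have := gap_tangent_convex x0 y0 hx hy.
rewrite -addn1 natrD; lra.
Qed.

End Gap.

Section SeqSums.
Variable R : realType.

Lemma sumr_nseq (F : R -> R) (j : nat) (a : R) :
  \sum_(y <- nseq j a) F y = j%:R * F a.
Proof.
elim: j => [|j IH]; first by rewrite big_nil mul0r.
by rewrite /= big_cons IH -addn1 natrD; ring.
Qed.

Lemma size_mul_le_sum (r : seq R) (w : R) : all (fun y => w <= y) r ->
  (size r)%:R * w <= \sum_(y <- r) y.
Proof.
elim: r => [|y r IH] /=; first by rewrite big_nil mul0r.
by move=> /andP[hy /IH h]; rewrite big_cons -addn1 natrD; lra.
Qed.

End SeqSums.

Section GapSums.
Variable R : realType.
Variables al be : R.
Hypothesis be0 : 0 < be.

Let w := (2 * be)^-1.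
Let be2 : 0 < 2 * be. Proof. by rewrite mulr_gt0. Qed.
Let w0 : 0 < w. Proof. by rewrite invr_gt0. Qed.
Let bew : 2 * be * w = 1. Proof. by rewrite mulfV ?gt_eqF. Qed.
Let ge_w y : (w <= y) = (1 <= 2 * be * y).
Proof. by rewrite -[w <= y](ler_pM2l be2) bew. Qed.
Let lt_w y : (y < w) = (2 * be * y < 1).
Proof. by rewrite -(ltr_pM2l be2) bew. Qed.

(* Values in the concave region [0, w) are merged pairwise with [gap_spread]
   until all but one of them sit at the inflection point [w]. *)
Lemma gap_merge_small (r : seq R) :
  all (fun y => (0 <= y) && (2 * be * y < 1)) r ->
  exists (j : nat) (t : R),
    [/\ 0 <= t, 2 * be * t < 1, \sum_(y <- r) y = j%:R * w + t &
        j%:R * gap al be w + gap al be t <= \sum_(y <- r) gap al be y].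
Proof.
elim: r => [|y r IH] /=.
  by move=> _; exists 0%N, 0; rewrite !big_nil gap0 !mul0r !addr0 mulr0.
move=> /andP[/andP[y0 hy] /IH [j [t [t0 ht es eg]]]]; rewrite !big_cons.
have [lt1|ge1] := ltP (2 * be * (t + y)) 1.
- exists j, (t + y); split; [exact: addr_ge0 | by [] | by rewrite es; lra |].
  have := @gap_spread _ al be t y 0 (t + y) (lexx 0) t0 y0
    (ltac:(lra)) (ltac:(lra)) (ltW be0) (ltW lt1) (esym (add0r _)).
  by rewrite gap0 add0r; lra.
- have tw : t < w by rewrite lt_w.
  have yw : y < w by rewrite lt_w.
  have ge1' : w <= t + y by rewrite ge_w.
  exists j.+1, (t + y - w); split.
  + by rewrite subr_ge0.
  + by rewrite -lt_w ltrBlDr ltrD.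
  + by rewrite -addn1 natrD; lra.
  + have := @gap_spread _ al be t y (t + y - w) w (ltac:(lra)) (ltac:(lra))
      (ltac:(lra)) (ltW tw) (ltW yw) (ltW be0) (ltac:(by rewrite bew)) (ltac:(ring)).
    by rewrite -addn1 natrD; lra.
Qed.

(* The large values, together with the copies of [w], are then replaced by
   their mean by Jensen's inequality on the convex region. *)
Lemma gap_sum_reduce (r : seq R) : all (fun y => 0 <= y) r ->
  exists (N : nat) (x t : R),
    [/\ 0 <= t, t < w, w <= x, N%:R * x + t = \sum_(y <- r) y &
        N%:R * gap al be x + gap al be t <= \sum_(y <- r) gap al be y].
Proof.
move=> r0.
pose P y := (1 <= 2 * be * y).
have split_r (F : R -> R) : \sum_(y <- r) F y =
    \sum_(y <- [seq y <- r | P y]) F y + \sum_(y <- [seq y <- r | ~~ P y]) F y.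
  by rewrite (bigID P) /= !big_filter.
have small : all (fun y => (0 <= y) && (2 * be * y < 1)) [seq y <- r | ~~ P y].
  by apply/allP => y; rewrite mem_filter -ltNge => /andP[-> /(allP r0) ->].
have [j [t [t0 ht es eg]]] := gap_merge_small small.
set rA := [seq y <- r | P y] ++ nseq j w.
have large : all (fun y => (0 < y) && (1 <= 2 * be * y)) rA.
  apply/allP => y; rewrite mem_cat mem_filter => /orP[/andP[Py _]|/nseqP[-> _]].
    by rewrite /P in Py; rewrite Py andbT -(pmulr_rgt0 _ be2) (lt_le_trans ltr01 Py).
  by rewrite w0 bew lexx.
have rAw : all (fun y => w <= y) rA.
  by apply/allP => y /(allP large) /andP[_]; rewrite ge_w.
have sum_rA (F : R -> R) : \sum_(y <- rA) F y =
    \sum_(y <- [seq y <- r | P y]) F y + j%:R * F w.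
  by rewrite big_cat sumr_nseq.
set N := size rA; set S := \sum_(y <- rA) y.
have [N0|N0] := posnP N.
  have rA0 : rA = [::] by apply: size0nil.
  have sum0 (F : R -> R) : \sum_(y <- [seq y <- r | P y]) F y + j%:R * F w = 0.
    by rewrite -sum_rA rA0 big_nil.
  exists 0%N, w, t; split; rewrite ?lt_w ?mul0r ?add0r //.
  - by rewrite split_r es; have /= := sum0 (fun y => y); lra.
  - by rewrite split_r; have := sum0 (gap al be); lra.
have NR0 : 0 < N%:R :> R by rewrite ltr0n.
have eNx : N%:R * (S / N%:R) = S by rewrite mulrC divfK // gt_eqF.
have xw : w <= S / N%:R by rewrite ler_pdivlMr // mulrC size_mul_le_sum.
have hx : 1 <= 2 * be * (S / N%:R) by rewrite -ge_w.
exists N, (S / N%:R), t; split; rewrite ?lt_w //.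
  by rewrite eNx split_r es /S sum_rA; ring.
have := gap_jensen al (lt_le_trans w0 xw) hx large; rewrite -/N -/S eNx subrr mulr0 addr0.
by rewrite split_r sum_rA; lra.
Qed.

End GapSums.

Section HTLine.
Variable R : realType.
Implicit Types k t x z : R.

(* The chord through [(1/k, ln k)] and [(1/(k+1), ln (k+1))] in the plane of
   (index of coincidence, entropy) is [y = ht_alpha k - ht_beta k * s]. *)
Definition ln_step k := ln (k + 1) - ln k.
Definition ht_alpha k := ln k + (k + 1) * ln_step k.
Definition ht_beta k := k * (k + 1) * ln_step k.

Lemma ln_step_ge k : 0 < k -> 1 <= (k + 1) * ln_step k.
Proof.
move=> k0; have k1 : 0 < k + 1 by lra.
have := subr_ln_ge k1 k0; rewrite -/(ln_step k).
have -> : 1 - k / (k + 1) = (k + 1)^-1 by field; rewrite gt_eqF.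
by move=> /(ler_wpM2l (ltW k1)); rewrite mulfV ?gt_eqF.
Qed.

Lemma ln_step_le k : 0 < k -> k * ln_step k <= 1.
Proof.
move=> k0; have k1 : 0 < k + 1 by lra.
have := subr_ln_le k1 k0; rewrite -/(ln_step k).
have -> : (k + 1) / k - 1 = k^-1 by field; rewrite gt_eqF.
by move=> /(ler_wpM2l (ltW k0)); rewrite mulfV ?gt_eqF.
Qed.

Lemma ht_beta_ge k : 0 < k -> k <= ht_beta k.
Proof.
move=> k0; rewrite /ht_beta -mulrA -{1}(mulr1 k).
by apply: ler_wpM2l; [exact: ltW | exact: ln_step_ge].
Qed.

Lemma ht_quot_ge_k k z : 0 < k -> 0 < z ->
  (1 - k * z) * (1 - (k + 1) * ln_step k) <= - ln z - ht_alpha k + ht_beta k * z.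
Proof.
move=> k0 z0; have := @ln_le_subr1 _ (k * z); rewrite mulr_gt0 // => /(_ isT).
by rewrite lnM ?posrE // /ht_alpha /ht_beta; lra.
Qed.

Lemma ht_quot_ge_kS k z : 0 < k -> 0 < z ->
  (1 - (k + 1) * z) * (1 - k * ln_step k) <= - ln z - ht_alpha k + ht_beta k * z.
Proof.
move=> k0 z0; have k1 : 0 < k + 1 by lra.
have := @ln_le_subr1 _ ((k + 1) * z); rewrite mulr_gt0 // => /(_ isT).
by rewrite lnM ?posrE // /ht_alpha /ht_beta /ln_step; lra.
Qed.

Lemma gap_ge0_small k t : 0 < k -> 0 <= t -> (k + 1) * t <= 1 ->
  0 <= gap (ht_alpha k) (ht_beta k) t.
Proof.
move=> k0 t0 ht; have [<-|tn0] := eqVneq 0 t; first by rewrite gap0.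
have {}t0 : 0 < t by rewrite lt_neqAle tn0 t0.
rewrite gapE; apply: mulr_ge0; first exact: ltW.
apply: le_trans (ht_quot_ge_kS k0 t0); apply: mulr_ge0; first lra.
by have := ln_step_le k0; lra.
Qed.

Lemma gap_ge0_large k t : 0 < k -> 0 < t -> 1 <= k * t ->
  0 <= gap (ht_alpha k) (ht_beta k) t.
Proof.
move=> k0 t0 ht; rewrite gapE; apply: mulr_ge0; first exact: ltW.
apply: le_trans (ht_quot_ge_k k0 t0); have hL := ln_step_ge k0.
have : 0 <= (k * t - 1) * ((k + 1) * ln_step k - 1) by apply: mulr_ge0; lra.
lra.
Qed.

End HTLine.

Section PairGap.
Variable R : realType.
Variable k : R.
Hypothesis k1 : 1 <= k.
Implicit Types x y z : R.

Let al := ht_alpha k.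
Let be := ht_beta k.
Let k0 : 0 < k. Proof. exact: lt_le_trans ltr01 k1. Qed.
Let kS0 : 0 < k + 1. Proof. by move: k1; lra. Qed.

Let pos_of_inv_le y : 1 <= (k + 1) * y -> 0 < y.
Proof. by move=> hy; rewrite -(pmulr_rgt0 _ kS0); lra. Qed.

Let inv_le_mono y z : 1 <= (k + 1) * y -> y <= z -> 1 <= (k + 1) * z.
Proof. by move=> hy yz; apply: le_trans hy _; rewrite ler_pM2l. Qed.

Let ge_inv y : (1 <= (k + 1) * y) = ((k + 1)^-1 <= y).
Proof. by rewrite -[_^-1 <= y](ler_pM2l kS0) mulfV ?gt_eqF. Qed.

Definition pair_gap x := k * gap al be x + gap al be (1 - k * x).
Definition pair_dgap x := dgap al be x - dgap al be (1 - k * x).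
Definition pair_ddgap x := ddgap be x + k * ddgap be (1 - k * x).

Lemma is_derive_pair_dgap x : 0 < x -> k * x < 1 ->
  is_derive x 1 pair_dgap (pair_ddgap x).
Proof.
move=> x0 kx; have := is_derive_dgap al be x0 => dx.
have := is_derive_comp_affine (is_derive_dgap al be (_ : 0 < 1 - k * x)).
move=> /(_ ltac:(lra)) dkx.
by apply: is_derive_eq; rewrite /pair_ddgap; ring.
Qed.

Lemma is_derive_pair_gap x : 0 < x -> k * x < 1 ->
  is_derive x 1 pair_gap (k * pair_dgap x).
Proof.
move=> x0 kx; have := is_derive_gap al be x0 => dx.
have := is_derive_comp_affine (is_derive_gap al be (_ : 0 < 1 - k * x)).
move=> /(_ ltac:(lra)) dkx.
by apply: is_derive_eq; rewrite -[k *: _]/(k * _) /pair_dgap; ring.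
Qed.

Lemma pair_ddgap_nonincr x y : 1 <= (k + 1) * x -> x <= y -> k * y < 1 ->
  pair_ddgap y <= pair_ddgap x.
Proof.
move=> hx xy hy.
have x0 := pos_of_inv_le hx.
have y0 : 0 < y := lt_le_trans x0 xy.
have kxy : k * x <= k * y := ler_wpM2l (ltW k0) xy.
have cx : 1 - k * x <= x by lra.
have cy : 1 - k * y <= y by lra.
have cxy : (1 - k * x) * (1 - k * y) <= x * y by apply: ler_pM => //; lra.
have xyk : x * y <= k ^+ 2 * (x * y).
  by rewrite ler_peMl ?mulr_ge0 ?(ltW x0) ?(ltW y0) //; have := k1; nra.
have -> : pair_ddgap y = pair_ddgap x - (y - x) *
    (k ^+ 2 * (x * y) - (1 - k * x) * (1 - k * y)) /
    (x * y * (1 - k * x) * (1 - k * y)).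
  rewrite /pair_ddgap /ddgap; field.
  by rewrite !gt_eqF //; lra.
have kx0 : 0 <= 1 - k * x by lra.
have ky0 : 0 <= 1 - k * y by lra.
rewrite gerBl; apply: divr_ge0; first by apply: mulr_ge0; lra.
by rewrite !mulr_ge0 // ltW.
Qed.

Lemma pair_gap_ge0_at_inv : 0 <= pair_gap (k + 1)^-1.
Proof.
have g0 : 0 <= gap al be (k + 1)^-1.
  apply: gap_ge0_small => //; first by rewrite invr_ge0 ltW.
  by rewrite mulfV ?gt_eqF.
rewrite /pair_gap (_ : 1 - k * (k + 1)^-1 = (k + 1)^-1); last by field; rewrite gt_eqF.
by rewrite addr_ge0 // mulr_ge0 // ltW.
Qed.

Lemma pair_gap_lb z : 1 <= (k + 1) * z -> k * z < 1 ->
  (1 - k * z) * (1 - (k + 1) * ln_step k) <= pair_gap z.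
Proof.
move=> hz kz; have z0 := pos_of_inv_le hz.
have g0 : 0 <= gap al be (1 - k * z).
  apply: gap_ge0_small => //; first lra.
  have := ler_wpM2l (ltW k0) hz; lra.
have := ler_wpM2l (_ : 0 <= k * z) (ht_quot_ge_k k0 z0).
move=> /(_ (mulr_ge0 (ltW k0) (ltW z0))) hq.
have hL := ln_step_ge k0.
have : 0 <= (1 - k * z) * ((1 - k * z) * ((k + 1) * ln_step k - 1)).
  by apply: mulr_ge0; [lra | apply: mulr_ge0; lra].
by rewrite /pair_gap gapE /al /be; lra.
Qed.

Lemma pair_dgap_ge0_before c x : 1 <= (k + 1) * c -> c <= x -> k * x < 1 ->
  0 <= pair_dgap x -> 0 <= pair_dgap c.
Proof.
move=> hc cx kx; set u := (k + 1)^-1.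
have uc : u <= c by rewrite -ge_inv.
have dgap_u : pair_dgap u = 0.
  rewrite /pair_dgap (_ : 1 - k * u = u) ?subrr //.
  by rewrite /u; field; rewrite gt_eqF.
have k_mono y : y <= x -> k * y < 1.
  by move=> yx; apply: le_lt_trans kx; rewrite ler_pM2l.
apply: (concave_ge0_between _ _ dgap_u uc cx (lexx x)).
  move=> y /andP[uy yx]; apply: is_derive_pair_dgap; last exact: k_mono.
  by apply: pos_of_inv_le; rewrite ge_inv.
move=> y1 y2 uy1 y12 y2x; apply: pair_ddgap_nonincr => //; last exact: k_mono.
by rewrite ge_inv.
Qed.

Lemma pair_gap_ge0_of_dgap x : 1 <= (k + 1) * x -> k * x < 1 ->
  0 <= pair_dgap x -> 0 <= pair_gap x.
Proof.
move=> hx kx Ex; set u := (k + 1)^-1.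
have hu1 : 1 <= (k + 1) * u by rewrite ge_inv.
have ux : u <= x by rewrite -ge_inv.
apply: le_trans (pair_gap_ge0_at_inv) _; apply: ler_derive_ge0 ux _ _.
  move=> y /andP[uy yx]; apply: is_derive_pair_gap; first exact/pos_of_inv_le/(inv_le_mono hu1 uy).
  by apply: le_lt_trans kx; rewrite ler_pM2l.
move=> y /andP[uy yx]; apply: mulr_ge0; first exact: ltW.
exact: pair_dgap_ge0_before (inv_le_mono hu1 uy) yx kx Ex.
Qed.

Lemma pair_gap_nonincr x z : 1 <= (k + 1) * x -> pair_dgap x < 0 ->
  x <= z -> k * z < 1 -> pair_gap z <= pair_gap x.
Proof.
move=> hx Ex xz kz; apply: ger_derive_le0 xz _ _ => y /andP[xy yz].
  apply: is_derive_pair_gap; first exact/pos_of_inv_le/(inv_le_mono hx xy).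
  by apply: le_lt_trans kz; rewrite ler_pM2l.
rewrite pmulr_rle0 // leNgt; apply/negP => /ltW Ey.
by move: Ex; rewrite ltNge (pair_dgap_ge0_before hx xy (le_lt_trans _ kz) Ey) // ler_pM2l.
Qed.

Lemma pair_gap_ge0 x : 1 <= (k + 1) * x -> k * x < 1 -> 0 <= pair_gap x.
Proof.
move=> hx kx; have [Ex|Ex] := leP 0 (pair_dgap x); first exact: pair_gap_ge0_of_dgap.
(* [pair_gap] decreases towards [pair_gap (1/k) = 0], at the rate given by
   [pair_gap_lb]. *)
apply/ler_addgt0Pr => e e0.
set c0 := (k + 1) * ln_step k - 1.
have c0_ge0 : 0 <= c0 by have := ln_step_ge k0; rewrite /c0; lra.
set d := Num.min ((1 - k * x) / 2) (e / (c0 + 1)).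
have d0 : 0 < d by rewrite lt_min !divr_gt0 //; lra.
have d1 : d <= (1 - k * x) / 2 by rewrite ge_min lexx.
have d2 : d <= e / (c0 + 1) by rewrite ge_min lexx orbT.
set z := (1 - d) / k.
have kz : k * z = 1 - d by rewrite /z; field; rewrite gt_eqF.
have xz : x <= z by rewrite -(ler_pM2l k0) kz; lra.
have := pair_gap_nonincr hx Ex xz (ltac:(lra)).
have := pair_gap_lb (inv_le_mono hx xz) (ltac:(lra)).
rewrite kz (_ : 1 - (k + 1) * ln_step k = - c0); last by rewrite /c0; lra.
have : e / (c0 + 1) * c0 = e - e / (c0 + 1) by field; lra.
have : 0 < e / (c0 + 1) by rewrite divr_gt0 //; lra.
have : d * c0 <= e / (c0 + 1) * c0 by rewrite ler_wpM2r.
lra.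
Qed.

End PairGap.

Section HTInequality.
Variable R : realType.

Lemma gap_two_level_ge0 (k N : nat) (x t : R) : (1 <= k)%N ->
  0 < x -> 0 <= t -> t <= x -> (k%:R + 1) * t <= 1 -> N%:R * x + t = 1 ->
  0 <= N%:R * gap (ht_alpha k%:R) (ht_beta k%:R) x + gap (ht_alpha k%:R) (ht_beta k%:R) t.
Proof.
move=> k1 x0 t0 tx ht eN; set K : R := k%:R.
have K0 : 0 < K by rewrite ltr0n.
have gap_t := gap_ge0_small K0 t0 ht.
have [hx|hx] := leP ((K + 1) * x) 1.
  by rewrite addr_ge0 // mulr_ge0 // (gap_ge0_small K0 (ltW x0) hx).
have [Kx|Kx] := leP 1 (K * x).
  by rewrite addr_ge0 // mulr_ge0 // (gap_ge0_large K0 x0 Kx).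
have NK : N = k.
  have Nk : (N < k.+1)%N.
    rewrite -(ltr_nat R) -natr1 ltNge; apply/negP => h.
    by have := ler_wpM2r (ltW x0) h; lra.
  have kN : (k < N.+1)%N.
    rewrite -(ltr_nat R) -natr1 ltNge; apply/negP => h.
    by have := ler_wpM2r (ltW x0) h; lra.
  by apply/eqP; rewrite eqn_leq -ltnS Nk -ltnS kN.
have K1 : 1 <= K by rewrite ler1n.
have := pair_gap_ge0 K1 (ltW hx) Kx.
rewrite NK in eN *; rewrite /pair_gap (_ : 1 - K * x = t) //; lra.
Qed.

Lemma sum_gap_ht_ge0 (k : nat) (r : seq R) : (1 <= k)%N ->
  all (fun y => 0 <= y) r -> \sum_(y <- r) y = 1 ->
  0 <= \sum_(y <- r) gap (ht_alpha k%:R) (ht_beta k%:R) y.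
Proof.
move=> k1 r0 r1; set K : R := k%:R.
have K0 : 0 < K by rewrite ltr0n.
have beK := ht_beta_ge K0.
have [N [x [t [t0 tw wx eN eg]]]] := gap_sum_reduce (ht_alpha K) (lt_le_trans K0 beK) r0.
have be2 : 0 < 2 * ht_beta K by rewrite mulr_gt0 // (lt_le_trans K0 beK).
have w0 : 0 < (2 * ht_beta K)^-1 by rewrite invr_gt0.
have K1 : 1 <= K by rewrite ler1n.
have hw : (K + 1) * (2 * ht_beta K)^-1 <= 1 by rewrite ler_pdivrMr // mul1r; lra.
apply: le_trans eg; apply: (gap_two_level_ge0 k1).
- exact: lt_le_trans w0 wx.
- exact: t0.
- exact: ltW (lt_le_trans tw wx).
- by apply: le_trans hw; rewrite ler_pM2l ?ltW //; lra.
- by rewrite eN.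
Qed.

End HTInequality.

Section Entropy.
Variable R : realType.
Variable d : nat.
Implicit Types p : 'I_d -> R.

Lemma xlog2xE (x : R) : xlog2x x = x * ln x / ln 2.
Proof. by rewrite /xlog2x; case: eqP => [->|_]; rewrite ?mul0r // mulrA. Qed.

Lemma shannonE p : shannon p = (\sum_(i < d) - (p i * ln (p i))) / ln 2.
Proof.
by rewrite /shannon mulr_suml -sumrN; apply: eq_bigr => i _; rewrite xlog2xE mulNr.
Qed.

Let ln2_gt0 : 0 < ln (2 : R). Proof. by rewrite ln_gt0 // ltr1n. Qed.

Lemma shannon_ge0 p : (forall i, 0 <= p i) -> \sum_i p i = 1 -> 0 <= shannon p.
Proof.
move=> p0 p1; rewrite shannonE; apply: divr_ge0; last exact: ltW.
apply: sumr_ge0 => i _; rewrite oppr_ge0; apply: mulr_ge0_le0 => //; apply: ln_le0.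
by rewrite -p1 (bigD1 i) //= lerDl sumr_ge0.
Qed.

Lemma shannon_ge_ht (k : nat) p : (1 <= k)%N ->
  (forall i, 0 <= p i) -> \sum_i p i = 1 ->
  (ht_alpha k%:R - ht_beta k%:R * \sum_i p i ^+ 2) / ln 2 <= shannon p.
Proof.
move=> k1 p0 p1; rewrite shannonE ler_pM2r ?invr_gt0 //.
set al := ht_alpha k%:R; set be := ht_beta k%:R.
have r0 : all (fun y => 0 <= y) [seq p i | i <- index_enum 'I_d].
  by apply/allP => y /mapP[i _ ->].
have := sum_gap_ht_ge0 k1 r0; rewrite !big_map => /(_ p1) hgap.
have e y : - (y * ln y) = gap al be y + (al * y - be * y ^+ 2) by rewrite /gap; ring.
rewrite (eq_bigr _ (fun i _ => e (p i))) big_split sumrB -!mulr_sumr p1 mulr1 /=.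
lra.
Qed.

End Entropy.

Lemma Re_sum (R : realType) (I : Type) (r : seq I) (F : I -> R[i]) :
  complex.Re (\sum_(i <- r) F i) = \sum_(i <- r) complex.Re (F i).
Proof.
elim: r => [|x r IH]; first by rewrite !big_nil.
by rewrite !big_cons -IH; case: (F x); case: (\sum_(i <- r) F i).
Qed.

Section Born.
Variable R : realType.
Variable d : nat.
Variable rho : 'M[R[i]]_d.
Hypothesis rho_density : density_op rho.

Lemma prob_ge0 (v : 'cV[R[i]]_d) : 0 <= prob rho v.
Proof. by case: rho_density => _ psd _; have := psd v; rewrite lecE => /andP[]. Qed.

(* The probabilities in a basis sum to [tr (U^* rho U) = tr rho = 1], where the
   matrix [U] has the basis vectors as columns. *)
Lemma sum_prob_basis (e : 'I_d -> 'cV[R[i]]_d) : orthonormal_basis e ->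
  \sum_i prob rho (e i) = 1.
Proof.
case: rho_density => _ _ tr1 ortho.
pose U : 'M[R[i]]_d := \matrix_(k, i) e i k 0.
pose V : 'M[R[i]]_d := \matrix_(i, k) (e i k 0)^*.
have VU : V *m U = 1%:M.
  apply/matrixP => i j; rewrite !mxE -(ortho i j) /cinner.
  by apply: eq_bigr => k _; rewrite !mxE.
have -> : \sum_i prob rho (e i) = complex.Re (\tr (V *m (rho *m U))).
  rewrite /prob -Re_sum /mxtrace; congr complex.Re; apply: eq_bigr => i _.
  rewrite /cinner !mxE; apply: eq_bigr => k _; rewrite !mxE; congr (_ * _).
  by apply: eq_bigr => l _; rewrite mxE.
by rewrite mxtrace_mulC -mulmxA (mulmx1C VU) mulmx1 tr1.
Qed.

End Born.

Lemma ht_line_interp (R : realType) (k a : R) :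
  (k + a) * ht_alpha k - ht_beta k =
  a * ((k + 1) * ln (k + 1)) + (1 - a) * (k * ln k).
Proof. by rewrite /ht_alpha /ht_beta /ln_step; ring. Qed.

Theorem theorem2 (R : realType) (d M : nat) (rho : 'M[R[i]]_d)
    (e : 'I_M -> 'I_d -> 'cV[R[i]]_d) (C : R) :
  (2 <= d)%N ->
  density_op rho ->
  MUBs e ->
  0 < C ->
  \sum_(m < M) \sum_(i < d) prob rho (e m i) ^+ 2 <= C ->
  let K : int := Num.floor (M%:R / C) in
  let a : R := M%:R / C - K%:~R in
  \sum_(m < M) shannon (fun i => prob rho (e m i)) >=
    a * C * xlog2x (K%:~R + 1) + (1 - a) * C * xlog2x (K%:~R).
Proof.
move=> _ hrho [onb _] C0 hC; cbv zeta.
have p0 m i := prob_ge0 hrho (e m i).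
have p1 m := sum_prob_basis hrho (onb m).
have [n ->] : exists n : nat, Num.floor (M%:R / C) = n%:Z.
  have : (0 <= Num.floor (M%:R / C))%R by rewrite floor_ge0 divr_ge0 // ltW.
  by case: (Num.floor _) => [n _|//]; exists n.
rewrite -pmulrn; set a := M%:R / C - n%:R.
have [->|n1] := posnP n.
  rewrite add0r !xlog2xE ln1 !(mulr0, mul0r) addr0.
  by apply: sumr_ge0 => m _; apply: shannon_ge0.
pose al : R := ht_alpha n%:R; pose be : R := ht_beta n%:R.
have n0 : 0 < n%:R :> R by rewrite ltr0n.
have be0 : 0 <= be := le_trans (ltW n0) (ht_beta_ge n0).
have -> : a * C * xlog2x (n%:R + 1) + (1 - a) * C * xlog2x n%:R =
    (M%:R * al - be * C) / ln 2.
  rewrite (_ : M%:R = C * (n%:R + a)); last by rewrite /a; field; rewrite gt_eqF.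
  rewrite (_ : C * (n%:R + a) * al - be * C = C * ((n%:R + a) * al - be)); last by ring.
  by rewrite ht_line_interp !xlog2xE; ring.
apply: le_trans (ler_sum _ (fun m _ => shannon_ge_ht n1 (p0 m) (p1 m))).
rewrite -mulr_suml ler_pM2r ?invr_gt0 ?ln_gt0 ?ltr1n //.
rewrite sumrB -mulr_sumr sumr_const card_ord [M%:R * al]mulr_natl.
exact: lerB (lexx _) (ler_wpM2l be0 hC).
Qed.
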